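(* Consider POWERSET MALIQUANT. The sequence starts at a heap of size one, and the first eight nim-values are, $0,0,1,0,2,1,4,8$. Otherwise, if $n=2k+1, k\ge 4$, then $\mathcal{SG}(n)=2^k$, and if $n\ge 10$ is even, then $\mathcal{SG}(n)=\mathcal{SG}(n/2)$.
   Context: POWERSET MALIQUANT is the impartial normal-play game on positive integer heaps where from a heap $n$ a player chooses any nonempty set of nondivisors $k$ of $n$ with $1\le k<n$ and moves to the disjunctive sum of those heaps; a heap with no such nondivisors is terminal. $\mathcal{SG}$ (nim-value) denotes the Sprague-Grundy value (mex rule, nim-sum). *)

From Stdlib Require Import PeanoNat.
From mathcomp Require Import all_boot.
Set Implicit Arguments. Unset Strict Implicit. Unset Printing Implicit Defensive.

Definition nondivs (n : nat) : seq nat := [seq k <- iota 1 n.-1 | ~~ (k %| n)].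

(* All subsequences (= subsets, since the input has no duplicates). *)
Fixpoint subseqs (s : seq nat) : seq (seq nat) :=
  match s with
  | [::] => [:: [::]]
  | x :: t => let r := subseqs t in r ++ map (cons x) r
  end.

Definition mex (s : seq nat) : nat := find (fun m => m \notin s) (iota 0 (size s).+1).

Definition nimsum (s : seq nat) : nat := foldr Nat.lxor 0 s.

(* Given the table t of nim-values of heaps 0..m-1, the nim-value of heap m:
   mex over all nonempty sets S of nondivisors k of m (1 <= k < m) of the
   nim-sum of the nim-values of the heaps in S (the disjunctive sum). *)
Definition sg_step (t : seq nat) (m : nat) : nat :=
  mex [seq nimsum [seq nth 0 t k | k <- A] | A <- subseqs (nondivs m) & A != [::]].

Fixpoint sg_table (n : nat) : seq nat :=
  match n with
  | 0 => [::]
  | n'.+1 => let t := sg_table n' in rcons t (sg_step t n')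
  end.

Definition SG (n : nat) : nat := nth 0 (sg_table n.+1) n.

(* Write n = o * 2 ^ a with o odd.  By strong induction SG agrees with the
   closed form [sg_closed], which for n >= 10 is 2 ^ e(o), e = [sg_exp].
   Every value below 2 ^ e(o) is the nim-sum of the values of a set of
   nondivisors: each bit 2 ^ i with i < e(o) is the value of some nondivisor
   c * 2 ^ b (c odd with e(c) = i, or a power of two for i = 3), and 0 is the
   nim-sum of two nondivisors c * 2 ^ b, c * 2 ^ (b + 1) of equal value.  On the
   other hand every nondivisor has value 0 or 2 ^ e(o') for its odd part o', and
   e(o') = e(o) forces o' = o, so the nondivisor would be o * 2 ^ b with b < a,
   a divisor.  Hence bit e(o) is clear in every option and the mex is 2 ^ e(o). *)

From HB Require Import structures.
From Stdlib Require Import PeanoNat.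
From mathcomp Require Import all_boot zify.

Set Implicit Arguments.
Unset Strict Implicit.
Unset Printing Implicit Defensive.

Lemma size_sg_table n : size (sg_table n) = n.
Proof. by elim: n => //= n IH; rewrite size_rcons IH. Qed.

Lemma nth_sg_table n k : k < n -> nth 0 (sg_table n) k = SG k.
Proof.
elim: n => // n IH; rewrite ltnS leq_eqVlt => /orP [/eqP -> // | ltkn].
by rewrite /= nth_rcons size_sg_table ltkn IH.
Qed.

Lemma SG_sg_step n : SG n = sg_step (sg_table n) n.
Proof. by rewrite /SG /= nth_rcons size_sg_table ltnn eqxx. Qed.

Lemma subseqs_subset s A : A \in subseqs s -> {subset A <= s}.
Proof.
elim: s A => [|x s IH] A /=; first by rewrite inE => /eqP ->.
rewrite mem_cat => /orP [/IH sub_As | /mapP [B /IH sub_Bs ->]] y.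
  by rewrite inE => /sub_As ->; rewrite orbT.
by rewrite !inE => /orP [-> // | /sub_Bs ->]; rewrite orbT.
Qed.

Lemma filter_in_subseqs (P : pred nat) s : filter P s \in subseqs s.
Proof.
elim: s => [|x s IH] /=; first by rewrite inE.
by rewrite mem_cat; case: (P x); rewrite ?map_f ?IH ?orbT.
Qed.

Lemma mem_nondivs n k : (k \in nondivs n) = [&& 0 < k, k < n & ~~ (k %| n)].
Proof. by rewrite mem_filter mem_iota andbC; case: n => [|n] /=; lia. Qed.

Lemma uniq_nondivs n : uniq (nondivs n).
Proof. by rewrite filter_uniq // iota_uniq. Qed.

Lemma mex_eq s m : (forall i, i < m -> i \in s) -> m \notin s -> mex s = m.
Proof.
move=> below notin_m.
have le_m_s : m <= size s.
  rewrite -(size_iota 0 m) uniq_leq_size ?iota_uniq // => i.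
  by rewrite mem_iota => /below.
rewrite /mex -(subnKC le_m_s) -addnS iotaD find_cat size_iota.
have -> : has (fun i => i \notin s) (iota 0 m) = false.
  by apply/hasP => -[i]; rewrite mem_iota add0n => /below ->.
by rewrite add0n /= notin_m addn0.
Qed.

HB.instance Definition _ := Monoid.isComLaw.Build nat 0 Nat.lxor
  (fun a b c => esym (Nat.lxor_assoc a b c)) Nat.lxor_comm Nat.lxor_0_l.

Lemma perm_nimsum s1 s2 : perm_eq s1 s2 -> nimsum s1 = nimsum s2.
Proof. by rewrite /nimsum !foldrE; apply: perm_big. Qed.

Lemma testbit_nimsum_clear s j :
  all (fun v => ~~ Nat.testbit v j) s -> Nat.testbit (nimsum s) j = false.
Proof.
elim: s => [|v s IH] /=; first by rewrite /nimsum /= Nat.bits_0.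
by case/andP => /negbTE clear_v /IH clear_s; rewrite Nat.lxor_spec clear_v clear_s.
Qed.

Lemma expn_natpow m n : m ^ n = Nat.pow m n.
Proof. by elim: n => // n IH; rewrite expnS IH. Qed.

Lemma lxor_expn_small j y : y < 2 ^ j -> Nat.lxor (2 ^ j) y = 2 ^ j + y.
Proof.
rewrite expn_natpow => /ltP lt_y.
rewrite -Nat.add_nocarry_lxor //; apply: Nat.bits_inj_0 => i.
rewrite Nat.land_spec Nat.pow2_bits_eqb; case: (Nat.eqb_spec j i) => //= <-.
by rewrite -(Nat.mod_small y (Nat.pow 2 j)) // Nat.mod_pow2_bits_high.
Qed.

(* Greedy binary expansion; the bound on the values in W keeps w outside W. *)
Lemma nimsum_span_pow2 (f : nat -> nat) (D : seq nat) j :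
  (forall i, i < j -> exists2 w, w \in D & f w = 2 ^ i) ->
  forall x, x < 2 ^ j -> exists W,
    [/\ uniq W, {subset W <= D}, all (fun w => f w < 2 ^ j) W & nimsum (map f W) = x].
Proof.
elim: j => [_ [|x] // _ | j IH gens x lt_x]; first by exists [::].
have {}IH := IH (fun i lt_ij => gens i (ltnW lt_ij)).
have lt_pow : 2 ^ j < 2 ^ j.+1 by rewrite ltn_exp2l.
case: (ltnP x (2 ^ j)) => [lt_xj | le_jx].
  have [W [uW sWD fW <-]] := IH x lt_xj; exists W; split=> //.
  by apply: sub_all fW => w /ltn_trans; apply.
have [w Dw fw] := gens j (ltnSn j).
have [W [uW sWD fW sumW]] : exists W, [/\ uniq W, {subset W <= D},
    all (fun w => f w < 2 ^ j) W & nimsum (map f W) = x - 2 ^ j].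
  by apply: IH; rewrite expnS in lt_x *; lia.
exists (w :: W); split => /=.
- by rewrite uW andbT; apply/negP => /(allP fW); rewrite /= fw ltnn.
- by move=> y; rewrite inE => /predU1P [-> | /sWD].
- by rewrite fw lt_pow; apply: sub_all fW => v /ltn_trans; apply.
- by rewrite fw sumW lxor_expn_small; rewrite expnS in lt_x *; lia.
Qed.

(* [sg_formula a o] is the value of the heap [o * 2 ^ a], [o] odd: the heaps
   1, 2, 4 have value 0, the other powers of two value 8 = 2 ^ 3; odd parts
   3, 5, 7 give 1, 2, 4, and an odd part [o >= 9] gives 2 ^ ((o - 1) / 2). *)
Definition sg_exp (o : nat) : nat :=
  if o == 1 then 3 else if o <= 7 then (o - 3)./2 else o./2.

Definition sg_formula (a o : nat) : nat :=
  if (o == 1) && (a < 3) then 0 else 2 ^ sg_exp o.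

Definition sg_closed (m : nat) : nat :=
  sg_formula (logn 2 m) (m %/ 2 ^ logn 2 m).

Lemma odd_part_decomposition m : 0 < m -> exists a o, odd o /\ m = o * 2 ^ a.
Proof.
move=> m_gt0; have [o] := pfactor_coprime (isT : prime 2) m_gt0.
by rewrite coprime2n; exists (logn 2 m), o.
Qed.

Lemma sg_closedE a o : odd o -> sg_closed (o * 2 ^ a) = sg_formula a o.
Proof.
move=> odd_o; have o_gt0 : 0 < o by case: o odd_o.
rewrite /sg_closed lognM ?expn_gt0 // (logn_coprime (p := 2)) ?coprime2n //.
by rewrite pfactorK // add0n mulnK // expn_gt0.
Qed.

Lemma sg_closed_odd_mul c b : odd c -> c != 1 -> sg_closed (c * 2 ^ b) = 2 ^ sg_exp c.
Proof. by move=> odd_c /negbTE c_neq1; rewrite sg_closedE // /sg_formula c_neq1. Qed.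

Lemma sg_closed_double m : 0 < m -> m != 4 -> sg_closed (m * 2) = sg_closed m.
Proof.
move=> /odd_part_decomposition [a [o [odd_o ->]]] m_neq4.
rewrite -mulnA -expnSr !sg_closedE // /sg_formula.
by case: (o =P 1) => //= o1; move: m_neq4; rewrite o1 mul1n; case: a => [|[|[|a]]].
Qed.

Lemma sg_formula_cases a o : sg_formula a o = 0 \/ sg_formula a o = 2 ^ sg_exp o.
Proof. by rewrite /sg_formula; case: ifP; [left | right]. Qed.

Lemma sg_exp_inj o o' : odd o -> odd o' -> sg_exp o = sg_exp o' -> o = o'.
Proof.
by rewrite /sg_exp; case: (o =P 1); case: (o' =P 1); case: (leqP o 7); case: (leqP o' 7); lia.
Qed.

Lemma odd_with_sg_exp i o : odd o -> i < sg_exp o -> i != 3 ->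
  exists c, [/\ odd c, c != 1, sg_exp c = i & if o == 1 then c <= 7 else c < o].
Proof.
move=> odd_o lt_i i_neq3.
have bound c : c <= i.*2.+1 \/ i < 3 /\ c <= i.*2 + 3 -> if o == 1 then c <= 7 else c < o.
  by move: lt_i; rewrite /sg_exp; case: (o =P 1); case: (leqP o 7); lia.
have [lt_i3 | lt_3i] : i < 3 \/ 3 < i by lia.
  exists (i.*2 + 3); split; last by apply: bound; lia.
  - by rewrite oddD odd_double.
  - by rewrite addn3.
  - by case: i lt_i3 {lt_i i_neq3 bound} => [|[|[|]]].
exists i.*2.+1; split; last by apply: bound; lia.
- by rewrite /= odd_double.
- by rewrite eqSS double_eq0; case: i lt_3i {lt_i i_neq3 bound}.
- rewrite /sg_exp ifN; last by rewrite eqSS double_eq0; case: i lt_3i {lt_i i_neq3 bound}.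
  by rewrite ifN; [lia | rewrite -ltnNge; lia].
Qed.

Lemma dvdn_odd_part c o a : odd c -> (c %| o * 2 ^ a) = (c %| o).
Proof. by move=> odd_c; rewrite mulnC Gauss_dvdr // coprimeXr // coprimen2. Qed.

Lemma dvdn_mul_expn_gt c o a b : odd o -> a < b -> ~~ (c * 2 ^ b %| o * 2 ^ a).
Proof.
move=> odd_o lt_ab; apply/negP => dvd_cn.
have : 2 ^ a.+1 %| o * 2 ^ a.
  by apply: dvdn_trans dvd_cn; apply: dvdn_trans (dvdn_mull c (dvdnn _)); apply: dvdn_exp2l.
by rewrite expnS dvdn_pmul2r ?expn_gt0 // dvdn2 odd_o.
Qed.

(* If [c] divides [o] properly then [o >= 3 c], so [c * 2 ^ (a + 1)] works. *)
Lemma odd_nondivisor_multiple c o a : odd o -> odd c -> c < o * 2 ^ a ->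
  (c %| o -> c < o) -> exists b, c * 2 ^ b < o * 2 ^ a /\ ~~ (c * 2 ^ b %| o * 2 ^ a).
Proof.
move=> odd_o odd_c lt_cn proper.
case dvd_co: (c %| o); last by exists 0; rewrite muln1 dvdn_odd_part // dvd_co.
exists a.+1; split; last exact: dvdn_mul_expn_gt.
have [q def_o] := dvdnP dvd_co; have lt_co := proper dvd_co.
have q3 : 3 <= q.
  by move: odd_o lt_co; rewrite def_o oddM; case: q {def_o} => [|[|[|q]]] //=; lia.
have c_gt0 : 0 < c by case: c odd_c {lt_cn proper dvd_co def_o lt_co}.
by rewrite def_o expnS mulnA ltn_pmul2r ?expn_gt0 //; nia.
Qed.

Definition closed_options (n : nat) : seq nat :=
  [seq nimsum (map sg_closed A) | A <- subseqs (nondivs n) & A != [::]].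

Lemma SG_mex_closed_options n :
  (forall k, 0 < k < n -> SG k = sg_closed k) -> SG n = mex (closed_options n).
Proof.
move=> IH; rewrite SG_sg_step /sg_step /closed_options; congr mex.
apply/eq_in_map => A; rewrite mem_filter => /andP [_ /subseqs_subset sub_A].
congr nimsum; apply/eq_in_map => k /sub_A; rewrite mem_nondivs => /and3P [k_gt0 lt_kn _].
by rewrite nth_sg_table // IH ?k_gt0.
Qed.

Lemma nimsum_in_closed_options n W : uniq W -> {subset W <= nondivs n} -> W != [::] ->
  nimsum (map sg_closed W) \in closed_options n.
Proof.
move=> uW sub_W W_nil; set A := filter (mem W) (nondivs n).
have perm_AW : perm_eq A W.
  apply: uniq_perm => [|//|y]; first by rewrite filter_uniq // uniq_nondivs.
  by rewrite mem_filter; apply/andb_idr => /sub_W.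
apply/mapP; exists A; last by apply: perm_nimsum; rewrite perm_sym perm_map.
rewrite mem_filter filter_in_subseqs andbT.
by apply: contraNneq W_nil => A_nil; rewrite -size_eq0 -(perm_size perm_AW) A_nil.
Qed.

Lemma zero_in_closed_options_pair n c b : odd c -> c != 1 ->
  c * 2 ^ b.+1 < n -> ~~ (c * 2 ^ b %| n) -> 0 \in closed_options n.
Proof.
move=> odd_c c_neq1 lt_n ndvd; have c_gt0 : 0 < c by case: c odd_c {c_neq1 lt_n ndvd}.
have lt_b : c * 2 ^ b < c * 2 ^ b.+1 by rewrite ltn_pmul2l // ltn_exp2l.
have := @nimsum_in_closed_options n [:: c * 2 ^ b; c * 2 ^ b.+1].
rewrite /nimsum /= !sg_closed_odd_mul // Nat.lxor_0_r Nat.lxor_nilpotent; apply=> //.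
  by rewrite /= inE andbT (ltn_eqF lt_b).
move=> y; rewrite !inE => /orP [] /eqP ->; rewrite mem_nondivs muln_gt0 c_gt0 expn_gt0 /=.
  by rewrite (ltn_trans lt_b lt_n).
rewrite lt_n; apply: contra ndvd; apply: dvdn_trans.
by rewrite dvdn_pmul2l // dvdn_exp2l.
Qed.

Lemma zero_in_closed_options n : 10 <= n -> 0 \in closed_options n.
Proof.
move=> n_ge10.
have [dvd3 | ndvd3] := boolP (3 %| n); last first.
  by apply: (@zero_in_closed_options_pair _ 3 0) => //; lia.
have [dvd5 | ndvd5] := boolP (5 %| n); last first.
  by apply: (@zero_in_closed_options_pair _ 5 0) => //; lia.
have [a [o [odd_o def_n]]] : exists a o, odd o /\ n = o * 2 ^ a.
  by apply: odd_part_decomposition; lia.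
have o_ge15 : 15 <= o.
  apply: dvdn_leq; first exact: odd_gt0.
  by rewrite -(@dvdn_odd_part 15 o a) // -def_n (@Gauss_dvd 3 5) // dvd3.
apply: (@zero_in_closed_options_pair _ 3 a.+1) => //; rewrite def_n.
  by rewrite !expnS !mulnA ltn_pmul2r ?expn_gt0 //; lia.
by apply: dvdn_mul_expn_gt.
Qed.

Lemma pow2_closed_nondivisor a o i : odd o -> 10 <= o * 2 ^ a -> i < sg_exp o ->
  exists2 w, w \in nondivs (o * 2 ^ a) & sg_closed w = 2 ^ i.
Proof.
move=> odd_o n_ge10 +; have pow_gt0 : 0 < 2 ^ a by rewrite expn_gt0.
have [-> | i_neq3] := eqVneq i 3 => lt_i.
  have o_ge9 : 9 <= o.
    by move: lt_i; rewrite /sg_exp; case: (o =P 1); case: (leqP o 7); lia.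
  exists (1 * 2 ^ a.+3); last by rewrite sg_closedE.
  rewrite mem_nondivs muln_gt0 expn_gt0 dvdn_mul_expn_gt //= ?andbT; last lia.
  by rewrite !expnS !mulnA ltn_pmul2r //; lia.
have [c [odd_c c_neq1 <- bound_c]] := odd_with_sg_exp odd_o lt_i i_neq3.
have [lt_cn proper_c] : c < o * 2 ^ a /\ (c %| o -> c < o).
  move: bound_c n_ge10; case: (o =P 1) => [-> | _] bound_c n_ge10.
    by rewrite dvdn1 (negbTE c_neq1); split; lia.
  by split=> //; apply: leq_trans bound_c _; rewrite leq_pmulr.
have [b [lt_w ndvd_w]] := odd_nondivisor_multiple odd_o odd_c lt_cn proper_c.
exists (c * 2 ^ b); last exact: sg_closed_odd_mul.
by rewrite mem_nondivs muln_gt0 expn_gt0 odd_gt0 // lt_w.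
Qed.

Lemma sg_closed_nondivisor_bit a o k : odd o -> k \in nondivs (o * 2 ^ a) ->
  Nat.testbit (sg_closed k) (sg_exp o) = false.
Proof.
move=> odd_o; rewrite mem_nondivs => /and3P [k_gt0 lt_kn ndvd_k].
have [b [o' [odd_o' def_k]]] := odd_part_decomposition k_gt0.
rewrite def_k sg_closedE //; case: (sg_formula_cases b o') => ->; first exact: Nat.bits_0.
rewrite expn_natpow Nat.pow2_bits_eqb; apply/Nat.eqb_neq => /sg_exp_inj eq_o.
move: lt_kn ndvd_k; rewrite def_k eq_o // ltn_pmul2l ?odd_gt0 // ltn_exp2l // => lt_ba.
by rewrite dvdn_pmul2l ?odd_gt0 // dvdn_exp2l // ltnW.
Qed.

Lemma expn_sg_exp_notin_closed_options a o :
  odd o -> 2 ^ sg_exp o \notin closed_options (o * 2 ^ a).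
Proof.
move=> odd_o; apply/mapP => -[A]; rewrite mem_filter => /andP [_ /subseqs_subset sub_A] sum_A.
have := Nat.pow2_bits_true (sg_exp o); rewrite -expn_natpow sum_A testbit_nimsum_clear //.
by apply/allP => _ /mapP [k /sub_A n_k ->]; rewrite (sg_closed_nondivisor_bit odd_o n_k).
Qed.

Lemma mex_closed_options n : 10 <= n -> mex (closed_options n) = sg_closed n.
Proof.
move=> n_ge10; have [a [o [odd_o def_n]]] : exists a o, odd o /\ n = o * 2 ^ a.
  by apply: odd_part_decomposition; lia.
rewrite def_n {n def_n} in n_ge10 *.
have -> : sg_closed (o * 2 ^ a) = 2 ^ sg_exp o.
  rewrite sg_closedE // /sg_formula; case: (o =P 1) => //= o1.
  by move: n_ge10; rewrite o1 mul1n; case: a => [|[|[|a]]].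
apply: mex_eq; last exact: expn_sg_exp_notin_closed_options.
move=> x lt_x; have [-> | x_gt0] := posnP x; first exact: zero_in_closed_options.
have [W [uW sub_W _ sum_W]] :=
  nimsum_span_pow2 (fun i => pow2_closed_nondivisor odd_o n_ge10) lt_x.
rewrite -sum_W; apply: nimsum_in_closed_options => //.
by apply: contraTneq x_gt0 => W_nil; rewrite -sum_W W_nil.
Qed.

Lemma SG_closed n : 0 < n -> SG n = sg_closed n.
Proof.
elim/ltn_ind: n => n IH n_gt0; have [lt_n10 | n_ge10] := ltnP n 10.
  have base : all (fun m => SG m == sg_closed m) (iota 1 9) by vm_compute.
  by apply/eqP/(allP base); rewrite mem_iota; lia.
rewrite SG_mex_closed_options ?mex_closed_options // => k /andP [k_gt0 lt_kn].
exact: IH.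
Qed.

Theorem mainTheorem16 :
  [/\ [:: SG 1; SG 2; SG 3; SG 4; SG 5; SG 6; SG 7; SG 8] = [:: 0; 0; 1; 0; 2; 1; 4; 8],
      (forall k : nat, 4 <= k -> SG (2 * k + 1) = 2 ^ k) &
      (forall n : nat, 10 <= n -> ~~ odd n -> SG n = SG (n %/ 2))].
Proof.
split.
- by vm_compute.
- move=> k k_ge4; rewrite SG_closed; last lia.
  have n_neq1 : 2 * k + 1 != 1 by lia.
  have := @sg_closed_odd_mul (2 * k + 1) 0; rewrite muln1 => -> //; last by rewrite oddD oddM.
  by congr (2 ^ _); rewrite /sg_exp (negbTE n_neq1) ifN; lia.
- move=> n n_ge10 even_n; have def_n : n = n %/ 2 * 2 by rewrite divnK // dvdn2.
  by rewrite !SG_closed 1?{1}def_n ?sg_closed_double //; lia.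
Qed.
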